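(* Let $n\ge3$. For a lattice $\mathbf L$ let $\mathbf L^r$ be the algebra on $L$ with ternary operations $t_1(x,y,z)=x(y+z)$, $t_h(x,y,z)=xz$ for $2\le h\le n-2$, $t_{n-1}(x,y,z)=z(y+x)$. Let $\mathbf C_k$ be the $k$-element chain $\{0,\dots,k-1\}$ and put $\mathbf A_1=\mathbf A_2=\mathbf C_4^r$, $\mathbf A_3=\mathbf C_2^r$ (with distinguished element $0$). Let $\mathbf A_4$ be an algebra with only ternary operations $t_1,\dots,t_{n-1}$ such that $t_1$ is the first projection, $t_{n-1}$ the third projection and $t_h(x,y,x)=x$ for $2\le h\le n-2$. For $a,d\in A_4$ let $\mathbf B(a,d)$ be the subalgebra of $\mathbf A_1\times\mathbf A_2\times\mathbf A_3\times\mathbf A_4$ with universe the set of elements having at least one of the forms $(\ast,0,\ast,a)$, $(0,0,\ast,\ast)$, $(0,\ast,\ast,d)$, $(\ast,\ast,0,\ast)$. If $\chi$ is a term in the operations $\circ,\cap$ and there are congruences $\tilde\alpha,\tilde\beta,\tilde\gamma$ of $\mathbf A_4$ for which the inclusion $\tilde\alpha(\tilde\beta\circ\tilde\alpha\tilde\gamma\circ\tilde\beta)\subseteq\chi(\tilde\alpha,\tilde\beta,\tilde\gamma)$ fails, then there are $a,d\in A_4$ and congruences $\alpha,\beta,\gamma$ of $\mathbf B=\mathbf B(a,d)$ such that $$\alpha(\beta\circ\alpha\gamma\circ\beta)\subseteq\gamma\circ\alpha\beta\circ\gamma\circ\chi(\alpha,\beta,\gamma)\circ\gamma\circ\alpha\beta\circ\gamma$$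 fails in $\mathbf B$. In particular, if for some odd $r$ the inclusion $\tilde\alpha(\tilde\beta\circ\tilde\alpha\tilde\gamma\circ\tilde\beta)\subseteq\tilde\alpha\tilde\beta\circ\tilde\alpha\tilde\gamma\circ\stackrel{r}{\dots}\circ\tilde\alpha\tilde\beta$ fails in $\mathbf A_4$, then $\alpha(\beta\circ\alpha\gamma\circ\beta)\subseteq\alpha\gamma\circ\alpha\beta\circ\stackrel{r+6}{\dots}\circ\alpha\gamma$ fails in some such $\mathbf B$.
   Context: Lattice operations are denoted by juxtaposition (meet) and $+$ (join); for relations, juxtaposition denotes intersection and $\circ$ composition. $X\circ Y\circ\stackrel{k}{\dots}\circ Z$ is the alternating composition $X\circ Y\circ X\circ\cdots$ with $k$ factors, last factor $Z$. The set $B(a,d)$ is a subuniverse under these hypotheses. *)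

From mathcomp Require Import all_boot.
Set Implicit Arguments. Unset Strict Implicit. Unset Printing Implicit Defensive.

Definition relP (U : Type) := U -> U -> Prop.

Definition rcomp (U : Type) (X Y : relP U) : relP U :=
  fun x z => exists y, X x y /\ Y y z.
Definition rmeet (U : Type) (X Y : relP U) : relP U := fun x y => X x y /\ Y x y.
Definition rsub (U : Type) (X Y : relP U) : Prop := forall x y, X x y -> Y x y.

Fixpoint altc (U : Type) (X Y : relP U) (k : nat) : relP U :=
  match k with
  | 0 => fun x y => x = y
  | 1 => X
  | S k' => rcomp X (altc Y X k')
  end.

Inductive cterm : Type :=
  | TAlpha | TBeta | TGamma
  | TComp of cterm & cterm
  | TMeet of cterm & cterm.

Fixpoint cterm_eval (U : Type) (a b c : relP U) (t : cterm) : relP U :=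
  match t with
  | TAlpha => a | TBeta => b | TGamma => c
  | TComp t1 t2 => rcomp (cterm_eval a b c t1) (cterm_eval a b c t2)
  | TMeet t1 t2 => rmeet (cterm_eval a b c t1) (cterm_eval a b c t2)
  end.

(* ---------- congruences ----------
   A congruence of the algebra with universe [dom] (a subuniverse of U) and
   ternary operations [ops h], 1 <= h <= n-1, represented as a relation on U
   supported in dom. *)
Definition is_cong (U : Type) (dom : U -> Prop) (n : nat)
  (ops : nat -> U -> U -> U -> U) (R : relP U) : Prop :=
  [/\ (forall x y, R x y -> dom x /\ dom y),
      (forall x, dom x -> R x x),
      (forall x y, R x y -> R y x),
      (forall x y z, R x y -> R y z -> R x z) &
      (forall h, 1 <= h <= n.-1 -> forall x y z x' y' z',
          R x x' -> R y y' -> R z z' -> R (ops h x y z) (ops h x' y' z'))].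

Definition omeet k (x y : 'I_k) : 'I_k := if (x <= y)%N then x else y.
Definition ojoin k (x y : 'I_k) : 'I_k := if (x <= y)%N then y else x.

Definition Lr_op (n k : nat) (h : nat) (x y z : 'I_k) : 'I_k :=
  if h == 1 then omeet x (ojoin y z)
  else if h == n.-1 then omeet z (ojoin y x)
  else omeet x z.

Record tup (T : Type) := Tup { c1 : 'I_4; c2 : 'I_4; c3 : 'I_2; c4 : T }.

Definition prod_op (T : Type) (n : nat) (t : nat -> T -> T -> T -> T)
  (h : nat) (p q r : tup T) : tup T :=
  Tup (Lr_op n h (c1 p) (c1 q) (c1 r)) (Lr_op n h (c2 p) (c2 q) (c2 r))
      (Lr_op n h (c3 p) (c3 q) (c3 r)) (t h (c4 p) (c4 q) (c4 r)).

Definition inB (T : Type) (a d : T) (p : tup T) : Prop :=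
  (c2 p = ord0 /\ c4 p = a) \/ (c1 p = ord0 /\ c2 p = ord0) \/
  (c1 p = ord0 /\ c4 p = d) \/ c3 p = ord0.

From mathcomp Require Import all_boot zify.
From Stdlib Require Import Classical.
Set Implicit Arguments. Unset Strict Implicit. Unset Printing Implicit Defensive.

(* Given a beta b (alpha gamma) c beta d with (a, d) in alpha but not in
   chi(alpha, beta, gamma), take on B = B(a, d) the congruences
     alpha_B = all x all x (=) x alpha,
     beta_B  = ker(k |-> k/2) x ker(k |-> k/2) x all x beta,
     gamma_B = ker(1 ~ 2) x ker(1 ~ 2) x (=) x gamma
   restricted to B, where [all] is the total relation; kernels of monotone
   maps of chains are congruences of C_k^r, and B is closed under the product
   operations.  The pair
   (3,0,1,a), (0,3,1,d) lies in the left-hand side through (2,1,0,b) and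
   (1,2,0,c).  A gamma o alpha beta o gamma path leaving (3,0,1,a) keeps the
   first coordinate nonzero and the third equal to 1, and every such element
   of B has fourth coordinate a; symmetrically next to (0,3,1,d).  So the
   middle factor of any chain on the right-hand side projects onto a pair in
   chi(alpha, beta, gamma) joining a to d. *)

Lemma not_rsub_exists (U : Type) (X Y : relP U) :
  ~ rsub X Y -> exists x y, X x y /\ ~ Y x y.
Proof.
move=> nXY; apply: NNPP => noXY; apply: nXY => x y Xxy.
by apply: NNPP => nYxy; apply: noXY; exists x, y.
Qed.

Lemma cterm_eval_map (U V : Type) (f : U -> V) (a b c : relP U) (a' b' c' : relP V) :
  (forall x y, a x y -> a' (f x) (f y)) -> (forall x y, b x y -> b' (f x) (f y)) ->
  (forall x y, c x y -> c' (f x) (f y)) ->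
  forall chi x y, cterm_eval a b c chi x y -> cterm_eval a' b' c' chi (f x) (f y).
Proof.
move=> fa fb fc; elim=> [| | |t1 IH1 t2 IH2|t1 IH1 t2 IH2] x y //=; auto.
- by case=> z [xz zy]; exists (f z); auto.
- by case; split; auto.
Qed.

Lemma altcS (U : Type) (X Y : relP U) k x z :
  altc X Y k.+1 x z <-> rcomp X (altc Y X k) x z.
Proof.
case: k => [|k] //=; split=> [Xxz|[y [Xxy <-]]] //.
by exists z.
Qed.

Lemma altc_map (U V : Type) (f : U -> V) k : forall (X Y : relP U) (X' Y' : relP V),
  (forall x y, X x y -> X' (f x) (f y)) -> (forall x y, Y x y -> Y' (f x) (f y)) ->
  forall x y, altc X Y k x y -> altc X' Y' k (f x) (f y).
Proof.
elim: k => [|k IH] X Y X' Y' fX fY x y; first by move=> /= ->.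
move=> /altcS [z [Xxz Yzy]]; apply/altcS; exists (f z).
by split; [exact: fX | exact: (IH Y X)].
Qed.

Lemma altc_add (U : Type) m k : forall (X Y : relP U) x z,
  altc X Y (m + k) x z ->
  rcomp (altc X Y m) (if odd m then altc Y X k else altc X Y k) x z.
Proof.
elim: m => [|m IH] X Y x z; first by move=> Xxz; exists x.
rewrite addSn => /altcS [y [Xxy /IH [w [YXyw wz]]]].
exists w; split; last by rewrite /=; case: (odd m) wz.
by apply/altcS; exists y.
Qed.

Lemma altc_split_odd (U : Type) (X Y : relP U) r x y : odd r ->
  altc X Y (r + 6) x y ->
  rcomp X (rcomp Y (rcomp X (rcomp (altc Y X r) (rcomp X (rcomp Y X))))) x y.
Proof.
rewrite -[6]/(3 + 3) addnCA => odd_r.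
move=> /(@altc_add _ 3 (r + 3) X Y x y) [u [XYXxu]].
move=> /(@altc_add _ r 3 Y X u y); rewrite odd_r => -[v [YXuv XYXvy]].
case: XYXxu => [w1 [Xxw1 [w2 [Yw1w2 Xw2u]]]].
by exists w1; split=> //; exists w2; split=> //; exists u; split=> //; exists v.
Qed.

Lemma homo_minn (f : nat -> nat) : {homo f : x y / x <= y} ->
  forall x y, f (minn x y) = minn (f x) (f y).
Proof.
move=> f_homo x y; case: (leqP x y) => [xy | /ltnW yx].
  by rewrite (minn_idPl (f_homo _ _ xy)).
by rewrite (minn_idPr (f_homo _ _ yx)).
Qed.

Lemma homo_maxn (f : nat -> nat) : {homo f : x y / x <= y} ->
  forall x y, f (maxn x y) = maxn (f x) (f y).
Proof.
move=> f_homo x y; case: (leqP x y) => [xy | /ltnW yx].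
  by rewrite (maxn_idPr (f_homo _ _ xy)).
by rewrite (maxn_idPl (f_homo _ _ yx)).
Qed.

Lemma Lr_opE n k h (x y z : 'I_k) : nat_of_ord (Lr_op n h x y z) =
  if h == 1 then minn x (maxn y z)
  else if h == n.-1 then minn z (maxn y x) else minn x z.
Proof.
have meetE (u v : 'I_k) : nat_of_ord (omeet u v) = minn u v.
  by rewrite /omeet; case: leqP.
have joinE (u v : 'I_k) : nat_of_ord (ojoin u v) = maxn u v.
  by rewrite /ojoin; case: leqP.
by rewrite /Lr_op; case: ifP => _; [|case: ifP => _]; rewrite meetE ?joinE.
Qed.

Definition kerc k (f : nat -> nat) : relP 'I_k := fun x y => f x = f y.

(* Equality and the total relation are the kernels of [id] and of a constant. *)
Lemma kerc_cong n k (f : nat -> nat) : {homo f : x y / x <= y} ->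
  is_cong (fun _ => True) n (@Lr_op n k) (@kerc k f).
Proof.
rewrite /kerc => f_homo; split=> [//|//|x y ->|x y z -> ->|] //.
move=> h _ x y z x' y' z' fx fy fz; rewrite !Lr_opE.
by case: ifP => _; [|case: ifP => _];
  rewrite !(homo_minn f_homo) ?(homo_maxn f_homo) fx ?fy fz.
Qed.

Lemma Lr_op_0l n k h (x y z : 'I_k.+1) :
  h != n.-1 -> x = ord0 -> Lr_op n h x y z = ord0.
Proof.
move=> hn1 x0; apply: val_inj; rewrite /= Lr_opE x0 (negbTE hn1).
by case: ifP => _; rewrite ?min0n.
Qed.

Lemma Lr_op_0r n k h (x y z : 'I_k.+1) :
  h != 1 -> z = ord0 -> Lr_op n h x y z = ord0.
Proof.
move=> h1 z0; apply: val_inj; rewrite /= Lr_opE z0 (negbTE h1).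
by case: ifP => _; rewrite ?min0n ?minn0.
Qed.

Section SubalgebraB.
Variables (n : nat) (T : Type) (t : nat -> T -> T -> T -> T) (a d : T).
Hypothesis n_ge3 : 3 <= n.
Hypothesis t1 : forall x y z, t 1 x y z = x.
Hypothesis tn : forall x y z, t n.-1 x y z = z.
Hypothesis th : forall h, 2 <= h <= n.-2 -> forall x y, t h x y x = x.

Lemma inB_of_zeros (p r s : tup T) : inB a d p -> inB a d r ->
  (c4 p = c4 r -> c4 s = c4 p) ->
  (c1 p = ord0 \/ c1 r = ord0 -> c1 s = ord0) ->
  (c2 p = ord0 \/ c2 r = ord0 -> c2 s = ord0) ->
  (c3 p = ord0 \/ c3 r = ord0 -> c3 s = ord0) -> inB a d s.
Proof.
move=> Bp Br e4 z1 z2 z3; move: Bp Br.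
case=> [[p2 p4]|[[p1 p2]|[[p1 p4]|p3]]];
  case=> [[r2 r4]|[[r1 r2]|[[r1 r4]|r3]]]; rewrite /inB.
all: first [ by right; right; right; auto
           | by right; left; auto
           | by left; rewrite e4 ?p4 ?r4; auto
           | by right; right; left; rewrite e4 ?p4 ?r4; auto ].
Qed.

Lemma inB_prod_op h p q r : 1 <= h <= n.-1 ->
  inB a d p -> inB a d q -> inB a d r -> inB a d (prod_op n t h p q r).
Proof.
move=> h_range Bp _ Br; rewrite /prod_op.
have [-> | h1] := eqVneq h 1.
  have h_ne : 1 != n.-1 by apply/eqP; lia.
  by apply: (inB_of_zeros Bp Bp) => /= [_|[] ?|[] ?|[] ?]; [rewrite t1|exact: Lr_op_0l..].
have [-> | hn1] := eqVneq h n.-1.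
  have h_ne : n.-1 != 1 by apply/eqP; lia.
  by apply: (inB_of_zeros Br Br) => /= [_|[] ?|[] ?|[] ?]; [rewrite tn|exact: Lr_op_0r..].
have h_mid : 2 <= h <= n.-2 by move: h_range h1 hn1 => /andP[? ?] /eqP ? /eqP ?; lia.
apply: (inB_of_zeros Bp Br) => /= [->|[] ?|[] ?|[] ?];
  by [rewrite th | apply: Lr_op_0l | apply: Lr_op_0r].
Qed.

Definition relB (P1 P2 : relP 'I_4) (P3 : relP 'I_2) (P4 : relP T) : relP (tup T) :=
  fun p q => [/\ inB a d p, inB a d q, P1 (c1 p) (c1 q), P2 (c2 p) (c2 q) &
                 P3 (c3 p) (c3 q) /\ P4 (c4 p) (c4 q)].

Lemma relB_c4 P1 P2 P3 P4 p q : relB P1 P2 P3 P4 p q -> P4 (c4 p) (c4 q).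
Proof. by case=> _ _ _ _ []. Qed.

Lemma relB_cong P1 P2 P3 P4 :
  is_cong (fun _ => True) n (@Lr_op n 4) P1 ->
  is_cong (fun _ => True) n (@Lr_op n 4) P2 ->
  is_cong (fun _ => True) n (@Lr_op n 2) P3 -> is_cong (fun _ => True) n t P4 ->
  is_cong (inB a d) n (prod_op n t) (relB P1 P2 P3 P4).
Proof.
move=> [_ r1 s1 tr1 m1] [_ r2 s2 tr2 m2] [_ r3 s3 tr3 m3] [_ r4 s4 tr4 m4].
split.
- by move=> p q [].
- by move=> p Bp; split; try split; auto.
- by move=> p q [? ? ? ? []]; split; try split; auto.
- by move=> p q s [? ? ? ? []] ? ? [? ? ? ? []] ? ?; split; try split; eauto.
- move=> h hh p q r p' q' r' [? ? ? ? []] ? ? [? ? ? ? []] ? ? [? ? ? ? []] ? ?.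
  by split; try split; rewrite /prod_op /=; auto; apply: inB_prod_op.
Qed.

Definition merge12 (k : nat) : nat := k - (1 < k).

Lemma merge12_homo : {homo merge12 : x y / x <= y}.
Proof. by rewrite /merge12 => x y; lia. Qed.

Definition alphaB (al : relP T) :=
  relB (@kerc 4 (fun _ => 0)) (@kerc 4 (fun _ => 0)) (@kerc 2 id) al.
Definition betaB (be : relP T) :=
  relB (@kerc 4 half) (@kerc 4 half) (@kerc 2 (fun _ => 0)) be.
Definition gammaB (ga : relP T) :=
  relB (@kerc 4 merge12) (@kerc 4 merge12) (@kerc 2 id) ga.

Lemma alphaB_cong al : is_cong (fun _ => True) n t al ->
  is_cong (inB a d) n (prod_op n t) (alphaB al).
Proof. by apply: relB_cong; apply: kerc_cong. Qed.

Lemma betaB_cong be : is_cong (fun _ => True) n t be ->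
  is_cong (inB a d) n (prod_op n t) (betaB be).
Proof. by apply: relB_cong; apply: kerc_cong => // x y; apply: half_leq. Qed.

Lemma gammaB_cong ga : is_cong (fun _ => True) n t ga ->
  is_cong (inB a d) n (prod_op n t) (gammaB ga).
Proof. by apply: relB_cong; apply: kerc_cong => //; exact: merge12_homo. Qed.
End SubalgebraB.

Section Violation.
Variables (T : Type) (al be ga : relP T) (a b c d : T).
Hypotheses (al_ad : al a d) (be_ab : be a b) (alga_bc : rmeet al ga b c)
  (be_cd : be c d).

Let alB := alphaB a d al.
Let beB := betaB a d be.
Let gaB := gammaB a d ga.

Definition pB : tup T := Tup (@Ordinal 4 3 isT) ord0 (@Ordinal 2 1 isT) a.
Definition qB : tup T := Tup ord0 (@Ordinal 4 3 isT) (@Ordinal 2 1 isT) d.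

Lemma pB_qB_in_lhs : rmeet alB (rcomp beB (rcomp (rmeet alB gaB) beB)) pB qB.
Proof.
have [al_bc ga_bc] := alga_bc.
pose u : tup T := Tup (@Ordinal 4 2 isT) (@Ordinal 4 1 isT) ord0 b.
pose v : tup T := Tup (@Ordinal 4 1 isT) (@Ordinal 4 2 isT) ord0 c.
have Bp : inB a d pB by left.
have Bq : inB a d qB by right; right; left.
have Bu : inB a d u by right; right; right.
have Bv : inB a d v by right; right; right.
split; first by split.
exists u; split; first by split.
by exists v; split; split.
Qed.

Lemma merge12_half_chain_neq0 x y w :
  merge12 x = merge12 3 -> x./2 = y./2 -> merge12 y = merge12 w -> w != 0.
Proof. by rewrite /merge12 => *; apply/eqP; lia. Qed.

Lemma ord_neq0 k (x : 'I_k.+1) : nat_of_ord x != 0 -> x <> ord0.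
Proof. by move=> /eqP x_neq0 x0; apply: x_neq0; rewrite x0. Qed.

Lemma c4_of_path_from_pB z1 z2 p :
  gaB pB z1 -> rmeet alB beB z1 z2 -> gaB z2 p -> c4 p = a.
Proof.
move=> [_ _ g1 _ [g3 _]] [[_ _ _ _ [a3 _]] [_ _ b1 _ _]] [_ Bp g1' _ [g3' _]].
have p3_neq0 : c3 p <> ord0.
  by apply: ord_neq0; rewrite -[val (c3 p)]g3' -a3 -g3.
have p1_neq0 : c1 p <> ord0.
  exact/ord_neq0/(merge12_half_chain_neq0 (esym g1) b1 g1').
by case: Bp => [[_ ->]|[[]|[[]|]]].
Qed.

Lemma c4_of_path_to_qB q w2 w1 :
  gaB q w2 -> rmeet alB beB w2 w1 -> gaB w1 qB -> c4 q = d.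
Proof.
move=> [Bq _ _ g2 [g3 _]] [[_ _ _ _ [a3 _]] [_ _ _ b2 _]] [_ _ _ g2' [g3' _]].
have q3_neq0 : c3 q <> ord0 by apply: ord_neq0; rewrite [val (c3 q)]g3 a3 g3'.
have q2_neq0 : c2 q <> ord0.
  exact/ord_neq0/(merge12_half_chain_neq0 g2' (esym b2) (esym g2)).
by case: Bq => [[]|[[]|[[_ ->]|]]].
Qed.

Lemma B_violation (G R : relP (tup T)) (R4 : relP T) : rsub G gaB ->
  (forall p q, R p q -> R4 (c4 p) (c4 q)) -> ~ R4 a d ->
  ~ rsub (rmeet alB (rcomp beB (rcomp (rmeet alB gaB) beB)))
         (rcomp G (rcomp (rmeet alB beB) (rcomp G
           (rcomp R (rcomp G (rcomp (rmeet alB beB) G)))))).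
Proof.
move=> G_gaB R_c4 not_R4ad /(_ _ _ pB_qB_in_lhs).
move=> [z1 [/G_gaB G1 [z2 [M1 [p [/G_gaB G2 [q [Rpq [w2 [/G_gaB G3 [w1 [M2 /G_gaB G4]]]]]]]]]]]].
apply: not_R4ad.
rewrite -(c4_of_path_from_pB G1 M1 G2) -(c4_of_path_to_qB G3 M2 G4).
exact: R_c4.
Qed.
End Violation.

Theorem theorem3p5 (n : nat) (hn : 3 <= n)
  (T : Type) (t : nat -> T -> T -> T -> T)
  (t1 : forall x y z, t 1 x y z = x)
  (tn : forall x y z, t n.-1 x y z = z)
  (th : forall h, 2 <= h <= n.-2 -> forall x y, t h x y x = x) :
  (forall chi : cterm,
     (exists al be ga : relP T,
        [/\ is_cong (fun _ => True) n t al, is_cong (fun _ => True) n t be,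
            is_cong (fun _ => True) n t ga &
            ~ rsub (rmeet al (rcomp be (rcomp (rmeet al ga) be)))
                   (cterm_eval al be ga chi)]) ->
     exists (a d : T) (al be ga : relP (tup T)),
       [/\ is_cong (inB a d) n (prod_op n t) al,
           is_cong (inB a d) n (prod_op n t) be,
           is_cong (inB a d) n (prod_op n t) ga &
           ~ rsub (rmeet al (rcomp be (rcomp (rmeet al ga) be)))
                  (rcomp ga (rcomp (rmeet al be) (rcomp ga
                    (rcomp (cterm_eval al be ga chi)
                      (rcomp ga (rcomp (rmeet al be) ga))))))])
  /\
  (forall r : nat, odd r ->
     (exists al be ga : relP T,
        [/\ is_cong (fun _ => True) n t al, is_cong (fun _ => True) n t be,
            is_cong (fun _ => True) n t ga &
            ~ rsub (rmeet al (rcomp be (rcomp (rmeet al ga) be)))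
                   (altc (rmeet al be) (rmeet al ga) r)]) ->
     exists (a d : T) (al be ga : relP (tup T)),
       [/\ is_cong (inB a d) n (prod_op n t) al,
           is_cong (inB a d) n (prod_op n t) be,
           is_cong (inB a d) n (prod_op n t) ga &
           ~ rsub (rmeet al (rcomp be (rcomp (rmeet al ga) be)))
                  (altc (rmeet al ga) (rmeet al be) (r + 6))]).
Proof.
split=> [chi | r odd_r] [al [be [ga [cal cbe cga]]]].
  move=> /not_rsub_exists [a [d [[al_ad [b [be_ab [c [alga_bc be_cd]]]]] fail]]].
  exists a, d, (alphaB a d al), (betaB a d be), (gammaB a d ga).
  split; [exact: alphaB_cong|exact: betaB_cong|exact: gammaB_cong|].
  apply: (B_violation al_ad be_ab alga_bc be_cd (fun _ _ => id) _ fail).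
  by apply: cterm_eval_map => p q; apply: relB_c4.
move=> /not_rsub_exists [a [d [[al_ad [b [be_ab [c [alga_bc be_cd]]]]] fail]]].
exists a, d, (alphaB a d al), (betaB a d be), (gammaB a d ga).
split; [exact: alphaB_cong|exact: betaB_cong|exact: gammaB_cong|].
move=> incl; apply: (B_violation al_ad be_ab alga_bc be_cd _ _ fail
  (fun p q lhs => altc_split_odd odd_r (incl p q lhs))) => [p q [] //|].
by apply: altc_map => p q [Rpq Spq];
  (split; [exact: relB_c4 Rpq | exact: relB_c4 Spq]).
Qed.
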